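(* Let $p,q\ge 0$ be integers and let $\lambda=(p+1,1^{q})$ be the hook partition (first row of length $p+1$, followed by $q$ rows of length $1$). Let $z_{-q},\dots,z_{-1},z_0,z_1,\dots,z_p\in\mathbb{C}$ with $\Re(z_k)\ge 1$ for all $-q\le k\le p$, $\Re(z_p)>1$ and $\Re(z_{-q})>1$, and let ${\pmb s}\in T(\lambda,\mathbb{C})$ be the content-parametrized tableau with first row $z_0,z_1,\dots,z_p$ and first column $z_0,z_{-1},\dots,z_{-q}$ (i.e. $s_{1,j}=z_{j-1}$ for $1\le j\le p+1$ and $s_{i,1}=z_{-(i-1)}$ for $1\le i\le q+1$). Then $$\zeta_{\lambda}({\pmb s})=\sum_{j=0}^{q}(-1)^j\,\zeta^{\star}(z_{-j},\ldots,z_{-1},z_0,z_1,\ldots,z_p)\,\zeta(z_{-j-1},\ldots,z_{-q}),$$ where $\zeta(z_{-j-1},\ldots,z_{-q})$ is interpreted as $1$ when $j=q$.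
   Context: Euler–Zagier multiple zeta-function and its star variant: $\zeta(s_1,\ldots,s_r)=\sum_{0<m_1<\cdots<m_r}m_1^{-s_1}\cdots m_r^{-s_r}$ and $\zeta^{\star}(s_1,\ldots,s_r)=\sum_{0<m_1\le\cdots\le m_r}m_1^{-s_1}\cdots m_r^{-s_r}$. For a partition $\lambda$, $T(\lambda,X)$ denotes the set of fillings of the Young diagram of $\lambda$ by elements of $X$ (entry in row $i$, column $j$ denoted by the $(i,j)$ entry), and $\mathrm{SSYT}(\lambda)$ is the set of semi-standard Young tableaux $M=(m_{ij})\in T(\lambda,\mathbb{N})$, i.e. $m_{i1}\le m_{i2}\le\cdots$ along each row and $m_{1j}<m_{2j}<\cdots$ down each column. For ${\pmb s}=(s_{ij})\in T(\lambda,\mathbb{C})$ the Schur multiple zeta-function is $\zeta_\lambda({\pmb s})=\sum_{M\in\mathrm{SSYT}(\lambda)}\prod_{(i,j)\in\lambda}m_{ij}^{-s_{ij}}$ (absolutely convergent when $\Re(s_{ij})\ge1$ for all boxes and $\Re(s_{ij})>1$ at the corners of $\lambda$). The content of box $(i,j)$ is $j-i$; ''content-parametrized'' means $s_{ij}=z_{j-i}$. *)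

From HB Require Import structures.
From mathcomp Require Import all_boot all_order all_algebra.
From mathcomp Require Import all_classical all_reals all_analysis.
From mathcomp Require Export complex.
Set Implicit Arguments.
Unset Strict Implicit.
Unset Printing Implicit Defensive.
Import Order.TTheory GRing.Theory Num.Theory.
Local Open Scope ring_scope.
Local Open Scope classical_set_scope.
Local Open Scope complex_scope.

Section Defs.
Variable R : realType.
Notation C := R[i].

(* n^{-s} for a positive integer n and complex s (principal branch,
   n^{-s} = exp(-s log n) with real log n). *)
Definition npow_neg (n : nat) (s : C) : C :=
  let L := ln (n%:R : R) in
  (expR (- complex.Re s * L) * cos (complex.Im s * L))
    +i* (- (expR (- complex.Re s * L) * sin (complex.Im s * L))).

Definition clim (u : nat -> C) : C :=
  limn (fun N => complex.Re (u N) : R^o) +i* limn (fun N => complex.Im (u N) : R^o).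

Definition mzeta_trunc (s : seq C) (N : nat) : C :=
  \sum_(m : {ffun 'I_(size s) -> 'I_N.+1} |
         [forall i, (0 < (m i : nat))%N] &&
         [forall i : 'I_(size s), forall j : 'I_(size s), ((i : nat) < j)%N ==> ((m i : nat) < m j)%N])
    \prod_(i < size s) npow_neg (m i) (nth 0 s i).

Definition mzetastar_trunc (s : seq C) (N : nat) : C :=
  \sum_(m : {ffun 'I_(size s) -> 'I_N.+1} |
         [forall i, (0 < (m i : nat))%N] &&
         [forall i : 'I_(size s), forall j : 'I_(size s), ((i : nat) < j)%N ==> ((m i : nat) <= m j)%N])
    \prod_(i < size s) npow_neg (m i) (nth 0 s i).

(* zeta(s_1,...,s_r) and zeta^star(s_1,...,s_r), as limits of truncations
   (the series are absolutely convergent in the region considered). *)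
Definition mzeta (s : seq C) : C := clim (mzeta_trunc s).
Definition mzetastar (s : seq C) : C := clim (mzetastar_trunc s).

(* Young diagram of a partition lam = [:: lam_1; lam_2; ...]; boxes are
   (i, j) with 0-based row i and column j (the paper's (i+1, j+1)). *)
Definition inbox (lam : seq nat) (i j : nat) : bool :=
  (i < size lam)%N && (j < nth 0 lam i)%N.

Definition box (lam : seq nat) := ('I_(size lam) * 'I_(nth 0 lam 0))%type.

(* Fillings with entries in {1..N} (encoded with value 0 outside the
   diagram) that are semi-standard Young tableaux. *)
Definition ssyt_trunc (lam : seq nat) (N : nat)
    (M : {ffun box lam -> 'I_N.+1}) : bool :=
  [forall b : box lam,
     if inbox lam b.1 b.2 then (0 < (M b : nat))%N else (M b : nat) == 0%N]
  && [forall b : box lam, forall b' : box lam,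
       [&& inbox lam b.1 b.2, inbox lam b'.1 b'.2,
           (b.1 : nat) == b'.1 & (b.2 < b'.2)%N] ==> ((M b : nat) <= M b')%N]
  && [forall b : box lam, forall b' : box lam,
       [&& inbox lam b.1 b.2, inbox lam b'.1 b'.2,
           (b.2 : nat) == b'.2 & (b.1 < b'.1)%N] ==> ((M b : nat) < M b')%N].

Definition schur_zeta_trunc (lam : seq nat) (s : nat -> nat -> C) (N : nat) : C :=
  \sum_(M : {ffun box lam -> 'I_N.+1} | ssyt_trunc M)
    \prod_(b : box lam | inbox lam b.1 b.2) npow_neg (M b) (s b.1 b.2).

Definition schur_zeta (lam : seq nat) (s : nat -> nat -> C) : C :=
  clim (schur_zeta_trunc lam s).

Definition hook (p q : nat) : seq nat := p.+1 :: nseq q 1%N.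

End Defs.

From HB Require Import structures.
From mathcomp Require Import all_boot all_order all_algebra.
From mathcomp Require Import all_classical all_reals all_analysis.
From mathcomp Require Import complex.
From mathcomp Require Import ring lra zify.
Import Order.TTheory GRing.Theory Num.Theory.
Import numFieldNormedType.Exports.
Set Implicit Arguments.
Unset Strict Implicit.
Unset Printing Implicit Defensive.
Local Open Scope ring_scope.
Local Open Scope complex_scope.

(* Reading the hook tableau up its first column and then
   along its first row gives a sequence x_0, ..., x_(q+p) whose entry x_t
   carries z_(t-q); the tableau is semi-standard iff x_0 > ... > x_q <= ...
   <= x_(q+p) (a "valley" at q).  For a cut point a = q - j, the product
   zeta^* * zeta counts the sequences decreasing strictly before a and
   increasing weakly from a; comparing x_(a-1) with x_a splits them into
   valleys at a and at a - 1, so the alternating sum over j telescopes to the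
   valley at q.  This identity holds for the sums truncated at any N.

   Every truncated multiple zeta (star) sum converges when
   Re s_i >= 1 and Re s_r > 1: its increments are dominated by those of the
   absolute sums, which are bounded by a product of one-variable sums.
   The theorem follows by passing to the limit componentwise in R[i]. *)

Lemma reindex_bij (T : Type) (idx : T) (op : Monoid.com_law idx)
  (X Y : finType) (P : pred X) (Q : pred Y) (h : X -> Y) (h' : Y -> X)
  (F : Y -> T) (G : X -> T) :
  (forall y, Q y -> h (h' y) = y) -> (forall x, h' (h x) = x) ->
  (forall x, Q (h x) = P x) -> (forall x, P x -> F (h x) = G x) ->
  \big[op/idx]_(y | Q y) F y = \big[op/idx]_(x | P x) G x.
Proof.
move=> hh' h'h QP FG.
rewrite (reindex_onto h h' hh'); apply: eq_big => [x|x].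
  by rewrite h'h eqxx QP andbT.
by rewrite QP => /andP[/FG].
Qed.

Section RealPowers.
Variable R : realType.

(* nweight a n = n^(-a) for real a; it is the modulus of npow_neg n s when
   a = Re s. *)
Definition nweight (a : R) (n : nat) : R := expR (- a * ln (n%:R : R)).

Lemma nweight_ge0 a n : 0 <= nweight a n.
Proof. exact: expR_ge0. Qed.

Lemma nweight1 a : nweight a 1 = 1.
Proof. by rewrite /nweight ln1 mulr0 expR0. Qed.

(* Discrete form of d * int_n^(n+1) x^(-1-d) dx = n^(-d) - (n+1)^(-d):
   d (n+1)^(-1-d) <= n^(-d) - (n+1)^(-d), using ln(1 + 1/n) >= 1/(n+1). *)
Lemma nweight_telescope (d : R) (n : nat) : 0 < d -> (0 < n)%N ->
  d * nweight (1 + d) n.+1 <= nweight d n - nweight d n.+1.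
Proof.
move=> d0 n0.
have n0R : (0 : R) < n%:R by rewrite ltr0n.
have n1R : (0 : R) < n.+1%:R by rewrite ltr0n.
have lnD : 1 / n.+1%:R <= ln (n.+1%:R : R) - ln n%:R.
  have -> : ln (n%:R : R) = ln (1 + (- (1 / n.+1%:R))) + ln n.+1%:R.
    rewrite -lnM ?posrE; last 2 first.
    - by rewrite subr_gt0 ltr_pdivrMr // mul1r ltr1n.
    - by [].
    by congr ln; rewrite mulrBl mul1r mulVf ?gt_eqF // -natr1 mul1r addrK.
  have : ln (1 + (- (1 / n.+1%:R))) <= - (1 / n.+1%:R) :> R.
    by apply: le_ln1Dx; rewrite ltrN2 ltr_pdivrMr // mul1r ltr1n ltnS.
  by rewrite opprD addrCA subrr addr0 lerNr.
set D := ln (n.+1%:R : R) - ln n%:R in lnD *.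
have wn : nweight d n = nweight d n.+1 * expR (d * D).
  by rewrite /nweight -expRD; congr expR; rewrite /D mulrBr; ring.
have wSn : nweight (1 + d) n.+1 = nweight d n.+1 * (1 / n.+1%:R).
  rewrite /nweight [in RHS]div1r -[X in _ * X^-1]lnK ?posrE // -expRN -expRD.
  by congr expR; ring.
rewrite wn wSn -{3}[nweight d n.+1]mulr1 -mulrBr mulrCA ler_wpM2l ?nweight_ge0 //.
apply: (@le_trans _ _ (d * D)); first by rewrite ler_wpM2l // ltW.
have := expR_ge1Dx (d * D); lra.
Qed.

(* Partial sums of sum_(k >= 1) k^(-1-d) are bounded by 1 + 1/d; the index 0
   is given weight 0 so that the sum ranges over all of 'I_N.+1. *)
Lemma nweight_partial_sum_le (d : R) (N : nat) : 0 < d ->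
  \sum_(k < N.+1) (if k == 0%N :> nat then 0 else nweight (1 + d) k) <= 1 + d^-1.
Proof.
move=> d0.
suff telescoped : forall N, (0 < N)%N ->
  \sum_(k < N.+1) (if k == 0%N :> nat then 0 else nweight (1 + d) k)
    <= 1 + d^-1 - d^-1 * nweight d N.
  case: N => [|N].
    by rewrite big_ord_recr big_ord0 /= add0r addr_ge0 // ?invr_ge0 ltW.
  apply: le_trans (telescoped N.+1 isT) _.
  by rewrite lerBlDr lerDl mulr_ge0 ?nweight_ge0 ?invr_ge0 // ltW.
clear N; elim=> [//|[|N] IH] _.
  by rewrite !big_ord_recr big_ord0 /= !add0r !nweight1 mulr1 addrK.
rewrite big_ord_recr /= (le_trans (lerD (IH isT) (lexx _))) // -addrA lerD2l.
have : nweight (1 + d) N.+2 <= d^-1 * nweight d N.+1 - d^-1 * nweight d N.+2.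
  rewrite -mulrBr -(ler_pM2l d0) mulrA mulfV ?gt_eqF // mul1r.
  exact: nweight_telescope.
lra.
Qed.

Lemma nweight_trade (a e : R) (n M : nat) : 1 <= a -> 0 <= e ->
  (0 < n)%N -> (n <= M)%N ->
  nweight a n <= nweight (1 + e) n * expR (e * ln (M%:R : R)).
Proof.
move=> a1 e0 n0 nM; rewrite /nweight -expRD ler_expR.
have ln_n : 0 <= ln (n%:R : R) by apply: ln_ge0; rewrite ler1n.
have ln_nM : ln (n%:R : R) <= ln (M%:R : R).
  by rewrite ler_ln ?posrE ?ltr0n ?ler_nat // (leq_trans n0).
have : e * ln (n%:R : R) <= e * ln (M%:R : R) by exact: ler_wpM2l.
nra.
Qed.

End RealPowers.

(* A real sequence whose increments are dominated by those of a bounded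
   sequence converges: u + t is nondecreasing and bounded, and so is t. *)
Lemma cvgn_dominated_increments (R : realType) (u t : R^nat) (B : R) :
  (forall N N', (N <= N')%N -> `|u N' - u N| <= t N' - t N) ->
  (forall N, t N <= B) -> cvgn u.
Proof.
move=> hd hB.
have t_nd : forall N N', (N <= N')%N -> t N <= t N'.
  by move=> N N' /hd h; rewrite -subr_ge0 (le_trans _ h).
have ct : cvgn t.
  apply: nondecreasing_is_cvgn; first by move=> m n; apply: t_nd.
  by exists B => _ [n _ <-].
have cut : cvgn (u + t).
  apply: nondecreasing_is_cvgn.
    move=> m n mn /=; have := hd _ _ mn; have := t_nd _ _ mn.
    rewrite ler_norml => _ /andP[h _]; change (u m + t m <= u n + t n); lra.
  exists (u 0%N - t 0%N + 2 * B) => _ [n _ <-].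
  change (u n + t n <= u 0%N - t 0%N + 2 * B).
  have := hd _ _ (leq0n n); rewrite ler_norml => /andP[_ h].
  have := hB n; have := hB 0%N; have := t_nd _ _ (leq0n n); lra.
have -> : u = (u + t) - t by apply: boolp.funext => n /=; rewrite addrK.
exact: is_cvgB.
Qed.

Section ComplexModulus.
Variable R : realType.
Local Notation C := R[i].

Lemma normc_npow_neg n (s : C) :
  Normc.normc (npow_neg n s) = nweight (complex.Re s) n.
Proof.
rewrite /Normc.normc /npow_neg /nweight sqrrN !exprMn -mulrDr cos2Dsin2 mulr1.
by rewrite sqrtr_sqr ger0_norm // expR_ge0.
Qed.

Lemma normc_sum_le I (r : seq I) (P : pred I) (F : I -> C) :
  Normc.normc (\sum_(i <- r | P i) F i) <= \sum_(i <- r | P i) Normc.normc (F i).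
Proof.
apply: (big_ind2 (fun x y => Normc.normc x <= y)) => //.
- by rewrite Normc.normc0.
- by move=> x1 x2 y1 y2 hx hy; exact: le_trans (le_normcD _ _) (lerD hx hy).
Qed.

Lemma Re_le_normc (w : C) : `|complex.Re w| <= Normc.normc w.
Proof.
by case: w => a b /=; rewrite -sqrtr_sqr; apply: ler_wsqrtr; rewrite lerDl sqr_ge0.
Qed.

Lemma Im_le_normc (w : C) : `|complex.Im w| <= Normc.normc w.
Proof.
by case: w => a b /=; rewrite -sqrtr_sqr; apply: ler_wsqrtr; rewrite lerDr sqr_ge0.
Qed.

End ComplexModulus.

Definition chain_sum (V : nmodType) (r N : nat) (P : ('I_r -> nat) -> bool)
  (F : ('I_r -> nat) -> V) : V :=
  \sum_(m : {ffun 'I_r -> 'I_N.+1} | P (fun i => nat_of_ord (m i)))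
     F (fun i => nat_of_ord (m i)).

Lemma chain_sum_widen (V : nmodType) r N N' P (F : ('I_r -> nat) -> V) :
  (N <= N')%N ->
  chain_sum N P F = \sum_(m : {ffun 'I_r -> 'I_N'.+1} |
                   P (fun i => nat_of_ord (m i)) && [forall i, (m i <= N)%N])
               F (fun i => nat_of_ord (m i)).
Proof.
move=> NN'; have le1 : (N.+1 <= N'.+1)%N by [].
symmetry; apply: (@reindex_bij _ _ _ _ _ _ _
   (fun m : {ffun 'I_r -> 'I_N.+1} => [ffun i => widen_ord le1 (m i)])
   (fun m : {ffun 'I_r -> 'I_N'.+1} => [ffun i => inord (m i)])).
- move=> y /andP[_ /forallP yN]; apply/ffunP => i; rewrite !ffunE.
  by apply: val_inj => /=; rewrite inordK // ltnS yN.
- move=> x; apply/ffunP => i; rewrite !ffunE.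
  by apply: val_inj => /=; rewrite inordK ?ltn_ord.
- move=> x; rewrite (_ : [forall i, _] = true); last first.
    by apply/forallP => i; rewrite ffunE /= -ltnS.
  by rewrite andbT; congr P; apply: boolp.funext => i; rewrite ffunE.
- by move=> x _; congr F; apply: boolp.funext => i; rewrite ffunE.
Qed.

Lemma chain_sum_diff (V : zmodType) r N N' P (F : ('I_r -> nat) -> V) :
  (N <= N')%N ->
  chain_sum N' P F - chain_sum N P F =
  \sum_(m : {ffun 'I_r -> 'I_N'.+1} |
          P (fun i => nat_of_ord (m i)) && ~~ [forall i, (m i <= N)%N])
     F (fun i => nat_of_ord (m i)).
Proof.
move=> NN'; rewrite (chain_sum_widen _ _ NN') /chain_sum.
rewrite (bigID (fun m : {ffun 'I_r -> 'I_N'.+1} => [forall i, (m i <= N)%N])) /=.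
by rewrite addrAC subrr add0r.
Qed.

Lemma chain_sum_nil (V : nmodType) r N P (F : ('I_r -> nat) -> V) :
  r = 0%N -> chain_sum N P F = chain_sum 0 P F.
Proof.
move=> r0; subst r; rewrite (chain_sum_widen _ _ (leq0n N)); apply: eq_bigl => m.
by rewrite (_ : [forall i : 'I_0, _] = true) ?andbT //; apply/forallP => -[].
Qed.

(* Let f be a positive nondecreasing
   chain, so that every entry is bounded by the last one M, and let
   gap = Re s_r - 1 > 0, eps = gap/(2r).  Each earlier factor satisfies
   f_i^(-Re s_i) <= f_i^(-1-eps) M^eps, and the collected factor M^(r eps)
   costs half of the surplus decay M^(-gap) of the last factor.  Hence every
   term is bounded by prod_i f_i^(-1-slack i), whose sum over all maps is at
   most prod_i (1 + 1/slack i). *)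
Section ChainDomination.
Variable R : realType.
Variables (r : nat) (P : ('I_r -> nat) -> bool) (sv : nat -> R[i]).
Hypothesis r_gt0 : (0 < r)%N.
Hypothesis P_chain : forall f, P f ->
  (forall i, 0 < f i)%N /\ (forall i j : 'I_r, (i < j)%N -> (f i <= f j)%N).
Hypothesis sv_ge1 : forall i, (i < r)%N -> 1 <= complex.Re (sv i).
Hypothesis sv_last_gt1 : 1 < complex.Re (sv r.-1).

Definition last_ord : 'I_r := Ordinal (etrans (ltn_predL r) r_gt0).
Definition gap : R := complex.Re (sv r.-1) - 1.
Definition eps : R := gap / (2 * r%:R).
Definition slack (i : 'I_r) : R := if i == last_ord then gap / 2 else eps.

Lemma gap_gt0 : 0 < gap. Proof. by rewrite subr_gt0. Qed.

Lemma eps_gt0 : 0 < eps.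
Proof. by rewrite divr_gt0 ?gap_gt0 // mulr_gt0 // ltr0n. Qed.

Lemma slack_gt0 i : 0 < slack i.
Proof. by rewrite /slack; case: ifP => _; [rewrite divr_gt0 ?gap_gt0|exact: eps_gt0]. Qed.

Lemma collect_trade (M : R) : expR (eps * M) ^+ r = expR (gap / 2 * M).
Proof.
rewrite -expRM_natl; congr expR; rewrite /eps.
have rn0 : (r%:R : R) != 0 by rewrite pnatr_eq0 -lt0n.
have -> : gap / (2 * r%:R) = gap / 2 / r%:R by rewrite invfM mulrA.
by rewrite mulrA [r%:R * _]mulrC divfK.
Qed.

Lemma chain_term_le f : P f ->
  \prod_(i < r) nweight (complex.Re (sv i)) (f i) <=
  \prod_(i < r) nweight (1 + slack i) (f i).
Proof.
move=> /P_chain [f_pos f_nd].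
set M := f last_ord.
have f_leM : forall i, (f i <= M)%N.
  move=> i; have [/eqP->//|ne] := boolP (i == last_ord); apply: f_nd.
  have : nat_of_ord i != r.-1 by apply: contra ne => /eqP E; apply/eqP/val_inj.
  by have := ltn_ord i; rewrite /last_ord /=; lia.
set c := expR (eps * ln (M%:R : R)).
have c_ge1 : 1 <= c.
  rewrite -expR0 ler_expR mulr_ge0 ?(ltW eps_gt0) // ln_ge0 // ler1n.
  exact: f_pos.
rewrite (bigD1 last_ord) //= [X in _ <= X](bigD1 last_ord) //=.
have others : \prod_(i < r | i != last_ord) nweight (complex.Re (sv i)) (f i) <=
    \prod_(i < r | i != last_ord) nweight (1 + slack i) (f i) * c ^+ r.
  apply: (@le_trans _ _ (\prod_(i < r | i != last_ord) (nweight (1 + eps) (f i) * c))).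
    apply: ler_prod => i _; rewrite nweight_ge0 /=.
    exact: nweight_trade (sv_ge1 (ltn_ord i)) (ltW eps_gt0) (f_pos i) (f_leM i).
  rewrite big_split /=; apply: ler_pM.
  - by apply: prodr_ge0 => *; exact: nweight_ge0.
  - by apply: prodr_ge0 => *; exact: (le_trans _ c_ge1).
  - rewrite le_eqVlt; apply/orP; left.
    by apply/eqP/eq_bigr => i /negbTE ne; rewrite /slack ne.
  - have -> : c ^+ r = \prod_(i < r) c.
      by rewrite -(big_mkord xpredT (fun _ => c)) prodr_const_nat subn0.
    rewrite [X in _ <= X](bigD1 last_ord) //=.
    by rewrite ler_peMl ?prodr_ge0 // => *; exact: le_trans c_ge1.
have last_factor : nweight (complex.Re (sv last_ord)) M * c ^+ r =
    nweight (1 + slack last_ord) M.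
  by rewrite collect_trade /nweight -expRD /slack eqxx; congr expR; rewrite /gap /=; field.
rewrite -last_factor -mulrA ler_wpM2l ?nweight_ge0 // mulrC.
by apply: (le_trans others); rewrite mulrC.
Qed.

Definition chain_bound : R := \prod_(i < r) (1 + (slack i)^-1).

Lemma abs_chain_sum_le N :
  chain_sum N P (fun f => \prod_(i < r) nweight (complex.Re (sv i)) (f i)) <= chain_bound.
Proof.
pose H (i : 'I_r) (k : nat) : R := if k == 0%N then 0 else nweight (1 + slack i) k.
have H_ge0 i k : 0 <= H i k by rewrite /H; case: ifP => _ //; exact: nweight_ge0.
apply: (@le_trans _ _ (\sum_(m : {ffun 'I_r -> 'I_N.+1}) \prod_(i < r) H i (m i))).
  rewrite /chain_sum [X in _ <= X](bigID (fun m : {ffun 'I_r -> 'I_N.+1} =>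
    P (fun i => nat_of_ord (m i)))) /=.
  apply: ler_wpDr; first by apply: sumr_ge0 => m _; apply: prodr_ge0.
  apply: ler_sum => m Pm; apply: (le_trans (chain_term_le Pm)).
  apply: ler_prod => i _; rewrite nweight_ge0 /H.
  have [f_pos _] := P_chain Pm.
  by rewrite ifN ?lexx // lt0n_neq0 ?(f_pos i).
rewrite -(bigA_distr_bigA (fun i (k : 'I_N.+1) => H i k)) /chain_bound.
apply: ler_prod => i _; rewrite sumr_ge0 //=.
exact: nweight_partial_sum_le (slack_gt0 i).
Qed.

End ChainDomination.

Section ChainConvergence.
Variable R : realType.
Variables (r : nat) (P : ('I_r -> nat) -> bool) (sv : nat -> R[i]).
Hypothesis P_chain : forall f, P f ->
  (forall i, 0 < f i)%N /\ (forall i j : 'I_r, (i < j)%N -> (f i <= f j)%N).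
Hypothesis sv_ge1 : forall i, (i < r)%N -> 1 <= complex.Re (sv i).
Hypothesis sv_last_gt1 : (0 < r)%N -> 1 < complex.Re (sv r.-1).

Let S N := chain_sum N P (fun f => \prod_(i < r) npow_neg (f i) (sv i)).
Let T N := chain_sum N P (fun f => \prod_(i < r) nweight (complex.Re (sv i)) (f i)).

Lemma abs_chain_sum_bounded : exists B, forall N, T N <= B.
Proof.
case: (posnP r) => [r0|r_gt0]; last first.
  by exists (chain_bound sv r_gt0) => N; apply: abs_chain_sum_le; auto.
by exists (T 0%N) => N; rewrite /T (chain_sum_nil _ _ _ r0).
Qed.

Lemma chain_sum_increment N N' : (N <= N')%N ->
  Normc.normc (S N' - S N) <= T N' - T N.
Proof.
move=> NN'; rewrite /S /T !(chain_sum_diff _ _ NN').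
apply: le_trans (normc_sum_le _ _ _) _.
rewrite le_eqVlt; apply/orP; left; apply/eqP/eq_bigr => m _.
rewrite (big_morph _ (@Normc.normcM R) (@Normc.normc1 R)).
by apply: eq_bigr => i _; rewrite normc_npow_neg.
Qed.

Lemma chain_sum_cvg :
  cvgn (fun N => complex.Re (S N)) /\ cvgn (fun N => complex.Im (S N)).
Proof.
have [B T_le] := abs_chain_sum_bounded.
split; apply: (cvgn_dominated_increments (t := T) (B := B)) => // N N' NN'.
- by rewrite -raddfB; apply: le_trans (Re_le_normc _) (chain_sum_increment NN').
- by rewrite -raddfB; apply: le_trans (Im_le_normc _) (chain_sum_increment NN').
Qed.

End ChainConvergence.

Section ComplexLimits.
Variable R : realType.
Local Notation C := R[i].
Local Open Scope classical_set_scope.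

Definition ccvg (u : nat -> C) (L : C) :=
  (fun N => complex.Re (u N)) @ \oo --> complex.Re L /\
  (fun N => complex.Im (u N)) @ \oo --> complex.Im L.

Lemma ccvg_clim (u : nat -> C) :
  cvgn (fun N => complex.Re (u N)) -> cvgn (fun N => complex.Im (u N)) ->
  ccvg u (clim u).
Proof. by move=> hRe hIm; split. Qed.

Lemma clim_ccvg u L : ccvg u L -> clim u = L.
Proof.
case: L => a b [hRe hIm]; rewrite /clim.
by congr Complex; apply: cvg_lim => //; exact: Rhausdorff.
Qed.

Lemma ccvg_cst (c : C) : ccvg (fun _ => c) c.
Proof. by split; apply: cvg_cst. Qed.

Lemma ccvgD u v L M : ccvg u L -> ccvg v M -> ccvg (fun N => u N + v N) (L + M).
Proof.
move=> [uRe uIm] [vRe vIm]; rewrite /ccvg !raddfD /=.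
under eq_fun do rewrite raddfD; split; first exact: cvgD uRe vRe.
under eq_fun do rewrite raddfD; exact: cvgD uIm vIm.
Qed.

Lemma ccvgM u v L M : ccvg u L -> ccvg v M -> ccvg (fun N => u N * v N) (L * M).
Proof.
case: L M => [a b] [c d] [uRe uIm] [vRe vIm]; split.
  have -> : (fun N => complex.Re (u N * v N)) = (fun N =>
      complex.Re (u N) * complex.Re (v N) - complex.Im (u N) * complex.Im (v N)).
    by apply: boolp.funext => N; case: (u N) => ? ?; case: (v N).
  exact: cvgB (cvgM uRe vRe) (cvgM uIm vIm).
have -> : (fun N => complex.Im (u N * v N)) = (fun N =>
    complex.Re (u N) * complex.Im (v N) + complex.Im (u N) * complex.Re (v N)).
  by apply: boolp.funext => N; case: (u N) => ? ?; case: (v N).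
exact: cvgD (cvgM uRe vIm) (cvgM uIm vRe).
Qed.

Lemma ccvg_sum n (F : 'I_n -> nat -> C) (L : 'I_n -> C) :
  (forall j, ccvg (F j) (L j)) ->
  ccvg (fun N => \sum_(j < n) F j N) (\sum_(j < n) L j).
Proof.
elim: n F L => [|n IH] F L FL.
  under eq_fun do rewrite big_ord0; rewrite big_ord0; exact: ccvg_cst.
under eq_fun do rewrite big_ord_recr; rewrite big_ord_recr.
by apply: ccvgD; [exact: IH | exact: FL].
Qed.

End ComplexLimits.

Definition chainb (e : rel nat) r (f : 'I_r -> nat) : bool :=
  [forall i, (0 < f i)%N] &&
  [forall i : 'I_r, forall j : 'I_r, ((i : nat) < j)%N ==> e (f i) (f j)].

Lemma chainbP (e : rel nat) r (f : 'I_r -> nat) (g : nat -> nat) :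
  (forall i : 'I_r, f i = g i) ->
  reflect ((forall k, (k < r)%N -> (0 < g k)%N) /\
           (forall k k', (k < k')%N -> (k' < r)%N -> e (g k) (g k'))) (chainb e f).
Proof.
move=> fg; apply: (iffP andP) => [[/forallP g_pos /forallP g_mon]|[g_pos g_mon]].
  split; first by move=> k kr; have := g_pos (Ordinal kr); rewrite fg.
  move=> k k' kk' k'r; have kr : (k < r)%N by apply: ltn_trans kk' k'r.
  by have := implyP (forallP (g_mon (Ordinal kr)) (Ordinal k'r)) kk'; rewrite !fg.
split; first by apply/forallP => i; rewrite fg; apply: g_pos.
apply/forallP => i; apply/forallP => i'; apply/implyP => ii'; rewrite !fg; exact: g_mon.
Qed.

Lemma chainb_nondecr (e : rel nat) r (f : 'I_r -> nat) :
  subrel e leq -> chainb e f ->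
  (forall i, 0 < f i)%N /\ (forall i j : 'I_r, (i < j)%N -> (f i <= f j)%N).
Proof.
move=> e_le /andP[/forallP f_pos /forallP f_mon]; split => // i j ij.
exact/e_le/(implyP (forallP (f_mon i) j) ij).
Qed.

Section MultipleZetaConvergence.
Variable R : realType.
Variable s : seq R[i].
Hypothesis s_ge1 : forall i, (i < size s)%N -> 1 <= complex.Re (nth 0 s i).
Hypothesis s_last_gt1 : (0 < size s)%N -> 1 < complex.Re (nth 0 s (size s).-1).

Lemma mzetastar_ccvg : ccvg (mzetastar_trunc s) (mzetastar s).
Proof.
have [] := @chain_sum_cvg R (size s) (@chainb leq (size s)) (nth 0 s)
  (fun f => chainb_nondecr (fun _ _ => id) (f := f)) s_ge1 s_last_gt1.
exact: ccvg_clim.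
Qed.

Lemma mzeta_ccvg : ccvg (mzeta_trunc s) (mzeta s).
Proof.
have [] := @chain_sum_cvg R (size s) (@chainb ltn (size s)) (nth 0 s)
  (fun f => chainb_nondecr (@ltnW) (f := f)) s_ge1 s_last_gt1.
exact: ccvg_clim.
Qed.

End MultipleZetaConvergence.

Lemma alternating_telescope (V : pzRingType) (q : nat) (a b : nat -> V) :
  (forall j, (j < q)%N -> a j = b j + b j.+1) -> a q = b q ->
  \sum_(j < q.+1) (-1) ^+ j * a j = b 0%N.
Proof.
elim: q a b => [|q IH] a b ab aq.
  by rewrite big_ord_recl big_ord0 expr0 mul1r addr0 aq.
rewrite big_ord_recl expr0 mul1r.
rewrite (eq_bigr (fun i : 'I_q.+1 => - ((-1) ^+ i * a i.+1))); last first.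
  by move=> i _; rewrite /= exprS mulN1r mulNr.
rewrite sumrN (IH (fun j => a j.+1) (fun j => b j.+1)) //; last first.
  by move=> j jq; exact: ab.
by rewrite ab // addrK.
Qed.

Section Sequences.
Variables (R : realType) (p q : nat) (z : int -> R[i]) (N : nat).
Local Notation len := (q + p).+1.
Local Notation seqT := {ffun 'I_len -> 'I_N.+1}.

Definition seq_weight (x : seqT) : R[i] :=
  \prod_(t < len) npow_neg (x t) (z (t%:Z - q%:Z)).

Definition xat (x : seqT) (t : nat) : nat := x (inord t).

Definition positive_seq (x : seqT) := [forall t, (0 < x t)%N].
Definition incr_from a (x : seqT) := [forall t : 'I_len, forall t' : 'I_len,
  ((a <= t)%N && (t < t')%N) ==> (x t <= x t')%N].
Definition decr_upto a (x : seqT) := [forall t : 'I_len, forall t' : 'I_len,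
  ((t < t')%N && (t' <= a)%N) ==> (x t' < x t)%N].

Definition cut_seq a (x : seqT) :=
  [&& positive_seq x, incr_from a x & decr_upto a.-1 x].
Definition valley_seq a (x : seqT) :=
  [&& positive_seq x, incr_from a x & decr_upto a x].

Lemma xat_ord (x : seqT) (t : 'I_len) : xat x t = x t.
Proof. by rewrite /xat inord_val. Qed.

Lemma positive_seqP (x : seqT) :
  reflect (forall t, (t < len)%N -> (0 < xat x t)%N) (positive_seq x).
Proof.
apply: (iffP forallP) => x_pos t; last by rewrite -xat_ord; apply: x_pos.
by move=> tn; have := x_pos (inord t); rewrite -xat_ord /xat inordK.
Qed.

Lemma incr_fromP a (x : seqT) :
  reflect (forall t t', (a <= t)%N -> (t < t')%N -> (t' < len)%N ->
             (xat x t <= xat x t')%N)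
          (incr_from a x).
Proof.
apply: (iffP forallP) => x_incr.
  move=> t t' at_ tt' t'n; have tn : (t < len)%N by apply: ltn_trans tt' t'n.
  have := forallP (x_incr (inord t)) (inord t'); rewrite !inordK //.
  by move/implyP; apply; rewrite at_ tt'.
move=> t; apply/forallP => t'; apply/implyP => /andP[at_ tt'].
by rewrite -!xat_ord; apply: x_incr.
Qed.

Lemma decr_uptoP a (x : seqT) :
  reflect (forall t t', (t < t')%N -> (t' <= a)%N -> (t' < len)%N ->
             (xat x t' < xat x t)%N)
          (decr_upto a x).
Proof.
apply: (iffP forallP) => x_decr.
  move=> t t' tt' t'a t'n; have tn : (t < len)%N by apply: ltn_trans tt' t'n.
  have := forallP (x_decr (inord t)) (inord t'); rewrite !inordK //.
  by move/implyP; apply; rewrite t'a tt'.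
move=> t; apply/forallP => t'; apply/implyP => /andP[tt' t'a].
by rewrite -!xat_ord; apply: x_decr.
Qed.

Lemma cut_seq_split a (x : seqT) : (0 < a)%N -> (a < len)%N ->
  (cut_seq a x && (xat x a < xat x a.-1)%N = valley_seq a x) /\
  (cut_seq a x && ~~ (xat x a < xat x a.-1)%N = valley_seq a.-1 x).
Proof.
move=> a0 an; rewrite /cut_seq /valley_seq; split; apply/idP/idP.
- move=> /andP[/and3P[x_pos x_incr /decr_uptoP x_decr] x_step].
  rewrite x_pos x_incr /=; apply/decr_uptoP => t t' tt' t'a t'n.
  have [t'a1|a1t'] := leqP t' a.-1; first exact: x_decr.
  have -> : t' = a by lia.
  have [-> //|ta1] := eqVneq t a.-1.
  by apply: ltn_trans x_step _; apply: x_decr => //; lia.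
- move=> /and3P[x_pos x_incr /decr_uptoP x_decr]; rewrite x_pos x_incr /=.
  rewrite x_decr ?andbT; [|lia|lia|lia].
  by apply/decr_uptoP => t t' tt' t'a t'n; apply: x_decr => //; lia.
- move=> /andP[/and3P[x_pos /incr_fromP x_incr x_decr] x_step].
  rewrite -leqNgt in x_step; rewrite x_pos x_decr andbT /=.
  apply/incr_fromP => t t' at_ tt' t'n.
  have [a_t|t_a] := leqP a t; first exact: x_incr.
  have -> : t = a.-1 by lia.
  apply: leq_trans x_step _; have [-> //|t'a] := eqVneq t' a.
  by apply: x_incr => //; lia.
- move=> /and3P[x_pos /incr_fromP x_incr x_decr].
  rewrite x_pos x_decr /= andbT -leqNgt x_incr ?andbT; [|lia|lia|lia].
  by apply/incr_fromP => t t' at_ tt' t'n; apply: x_incr => //; lia.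
Qed.

Lemma alternating_cut_sum :
  \sum_(j < q.+1) (-1) ^+ j * \sum_(x : seqT | cut_seq (q - j) x) seq_weight x =
  \sum_(x : seqT | valley_seq q x) seq_weight x.
Proof.
have := alternating_telescope
  (a := fun j => \sum_(x : seqT | cut_seq (q - j) x) seq_weight x)
  (b := fun j => \sum_(x : seqT | valley_seq (q - j) x) seq_weight x).
rewrite subn0; apply.
  move=> j jq; rewrite (bigID (fun x : seqT => (xat x (q - j) < xat x (q - j).-1)%N)) /=.
  have [a0 an] : (0 < q - j)%N /\ (q - j < len)%N by split; lia.
  rewrite subnS; congr (_ + _); apply: eq_bigl => x;
    by have [valley_a valley_a1] := cut_seq_split x a0 an.
by rewrite subnn.
Qed.

End Sequences.

(* The hook tableau read as a sequence: position t < q is the box (q - t, 0)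
   of the first column, position t >= q the box (0, t - q) of the first row,
   so that the content of the box at position t is t - q. *)
Section HookReading.
Variables (p q : nat).
Local Notation len := (q + p).+1.
Local Notation lam := (hook p q).
Local Notation bx := (box (hook p q)).

Lemma inbox_hook (i j : nat) : inbox lam i j =
  ((i == 0%N) && (j <= p)%N) || [&& (0 < i)%N, (i <= q)%N & j == 0%N].
Proof.
rewrite /inbox /= size_nseq; case: i => [|i] /=; first by rewrite orbF ltnS.
by rewrite nth_nseq; case: ifP => iq /=; rewrite ?ltnS ?leqn0 ?ltn0 ?andbF ?iq.
Qed.

Definition hook_box (t : 'I_len) : bx :=
  if (q <= t)%N then (inord 0, inord (t - q)) else (inord (q - t), inord 0).

Lemma hook_box1 t : ((hook_box t).1 : nat) = (q - t)%N.
Proof.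
rewrite /hook_box; case: ifP => qt /=; rewrite inordK ?size_nseq //; lia.
Qed.

Lemma hook_box2 t : ((hook_box t).2 : nat) = (t - q)%N.
Proof.
have := ltn_ord t; rewrite /hook_box; case: ifP => qt /= tn; rewrite inordK //; lia.
Qed.

Definition box_pos (b : bx) : nat := (q + b.2 - b.1)%N.

Lemma inbox_hook_box t : inbox lam (hook_box t).1 (hook_box t).2.
Proof. by rewrite inbox_hook hook_box1 hook_box2; have := ltn_ord t; lia. Qed.

Lemma box_pos_hook_box t : box_pos (hook_box t) = t.
Proof. by rewrite /box_pos hook_box1 hook_box2; have := ltn_ord t; lia. Qed.

Lemma box_pos_lt (b : bx) : inbox lam b.1 b.2 -> (box_pos b < len)%N.
Proof. by rewrite inbox_hook /box_pos; lia. Qed.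

Lemma hook_box_pos (b : bx) : inbox lam b.1 b.2 -> hook_box (inord (box_pos b)) = b.
Proof.
move=> b_in; have b_lt := box_pos_lt b_in; move: b_in; rewrite inbox_hook => b_in.
case: b b_in b_lt => [i j] /= b_in b_lt; apply: injective_projections; apply: val_inj => /=;
  rewrite ?hook_box1 ?hook_box2 inordK // /box_pos /=; lia.
Qed.

Variable N : nat.
Local Notation seqT := {ffun 'I_len -> 'I_N.+1}.

Definition tableau_of_seq (x : seqT) : {ffun bx -> 'I_N.+1} :=
  [ffun b : bx => if inbox lam b.1 b.2 then x (inord (box_pos b)) else ord0].
Definition seq_of_tableau (M : {ffun bx -> 'I_N.+1}) : seqT :=
  [ffun t => M (hook_box t)].

Lemma tableau_of_seq_hook_box x t : tableau_of_seq x (hook_box t) = x t.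
Proof. by rewrite ffunE inbox_hook_box box_pos_hook_box inord_val. Qed.

Lemma tableau_of_seq_in x (b : bx) :
  inbox lam b.1 b.2 -> (tableau_of_seq x b : nat) = xat x (box_pos b).
Proof. by move=> b_in; rewrite ffunE b_in. Qed.

Lemma tableau_of_seqK x : seq_of_tableau (tableau_of_seq x) = x.
Proof. by apply/ffunP => t; rewrite ffunE tableau_of_seq_hook_box. Qed.

Lemma seq_of_tableauK M : ssyt_trunc M -> tableau_of_seq (seq_of_tableau M) = M.
Proof.
move=> /andP[/andP[/forallP M_supp _] _]; apply/ffunP => b; rewrite ffunE.
case: ifP => b_in; first by rewrite ffunE hook_box_pos.
by have := M_supp b; rewrite b_in => /eqP M0; apply: val_inj; rewrite /= M0.
Qed.

(* Row and column conditions of the hook tableau are exactly a valley at q: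
   the column read upwards decreases strictly to the corner, the row
   increases weakly from it. *)
Lemma ssyt_tableau_of_seq x : ssyt_trunc (tableau_of_seq x) = valley_seq q x.
Proof.
apply/idP/idP.
  move=> /andP[/andP[/forallP T_pos /forallP T_row] /forallP T_col].
  apply/and3P; split.
  - apply/positive_seqP => t tn; have := T_pos (hook_box (inord t)).
    by rewrite inbox_hook_box tableau_of_seq_hook_box.
  - apply/incr_fromP => t t' qt tt' t'n; have tn : (t < len)%N by lia.
    have := implyP (forallP (T_row (hook_box (inord t))) (hook_box (inord t'))).
    rewrite !inbox_hook_box !tableau_of_seq_hook_box !hook_box1 !hook_box2 !inordK //.
    by apply; apply/and3P; split => //; apply/andP; split; lia.
  - apply/decr_uptoP => t t' tt' t'q t'n; have tn : (t < len)%N by lia.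
    have := implyP (forallP (T_col (hook_box (inord t'))) (hook_box (inord t))).
    rewrite !inbox_hook_box !tableau_of_seq_hook_box !hook_box1 !hook_box2 !inordK //.
    by apply; apply/and3P; split => //; apply/andP; split; lia.
move=> /and3P[/positive_seqP x_pos /incr_fromP x_incr /decr_uptoP x_decr].
apply/andP; split; first (apply/andP; split).
- apply/forallP => b; case: ifP => b_in; last by rewrite ffunE b_in.
  by rewrite tableau_of_seq_in // x_pos // box_pos_lt.
- apply/forallP => b; apply/forallP => b'; apply/implyP => /and4P[b_in b'_in /eqP e lt].
  rewrite !tableau_of_seq_in //; have := box_pos_lt b'_in.
  by move: b_in b'_in e lt; rewrite !inbox_hook /box_pos => ? ? ? ? ?; apply: x_incr; lia.
- apply/forallP => b; apply/forallP => b'; apply/implyP => /and4P[b_in b'_in /eqP e lt].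
  rewrite !tableau_of_seq_in //; have := box_pos_lt b_in.
  by move: b_in b'_in e lt; rewrite !inbox_hook /box_pos => ? ? ? ? ?; apply: x_decr; lia.
Qed.

End HookReading.

Lemma schur_zeta_trunc_hook (R : realType) (p q : nat) (z : int -> R[i]) N :
  schur_zeta_trunc (hook p q) (fun i j => z (j%:Z - i%:Z)) N =
  \sum_(x : {ffun 'I_(q + p).+1 -> 'I_N.+1} | valley_seq q x) seq_weight z x.
Proof.
apply: (@reindex_bij _ _ _ _ _ _ _ (@tableau_of_seq p q N) (@seq_of_tableau p q N)).
- exact: seq_of_tableauK.
- exact: tableau_of_seqK.
- exact: ssyt_tableau_of_seq.
move=> x _; rewrite /seq_weight.
apply: (@reindex_bij _ _ _ _ _ _ _ (@hook_box p q)
   (fun b => (inord (box_pos b) : 'I_(q + p).+1))).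
- exact: hook_box_pos.
- by move=> t; apply: val_inj; rewrite /= box_pos_hook_box inordK.
- exact: inbox_hook_box.
move=> t _; rewrite tableau_of_seq_hook_box hook_box1 hook_box2.
by congr (npow_neg _ (z _)); have := ltn_ord t; lia.
Qed.

(* The product zeta^*_N(z_(-j),...,z_p) * zeta_N(z_(-j-1),...,z_(-q)) is the
   sum over sequences cut at a = q - j: the star chain is x_a <= ... <= x_(q+p)
   and the strict chain is x_(a-1) > ... > x_0 read backwards. *)
Section ProductAsCut.
Variables (R : realType) (p q : nat) (z : int -> R[i]) (N j : nat).
Hypothesis j_le_q : (j <= q)%N.
Local Notation len := (q + p).+1.
Local Notation seqT := {ffun 'I_len -> 'I_N.+1}.
Local Notation a := (q - j)%N.
Local Notation star_args := [seq z (k%:Z - j%:Z) | k <- iota 0 (j + p).+1].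
Local Notation strict_args := [seq z (- ((j.+1 + i)%N)%:Z) | i <- iota 0 (q - j)].
Local Notation starT := {ffun 'I_(size star_args) -> 'I_N.+1}.
Local Notation strictT := {ffun 'I_(size strict_args) -> 'I_N.+1}.

Lemma size_star_args : size star_args = (j + p).+1.
Proof. by rewrite size_map size_iota. Qed.

Lemma size_strict_args : size strict_args = (q - j)%N.
Proof. by rewrite size_map size_iota. Qed.

Lemma nth_star_args k : (k < (j + p).+1)%N -> nth 0 star_args k = z (k%:Z - j%:Z).
Proof. by move=> k_lt; rewrite (nth_map 0%N) ?size_iota // nth_iota. Qed.

Lemma nth_strict_args i : (i < q - j)%N ->
  nth 0 strict_args i = z (- ((j.+1 + i)%N)%:Z).
Proof. by move=> i_lt; rewrite (nth_map 0%N) ?size_iota // nth_iota. Qed.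

Definition entry r (f : {ffun 'I_r -> 'I_N.+1}) (k : nat) : 'I_N.+1 :=
  if insub k is Some i then f i else ord0.

Lemma entry_ord r (f : {ffun 'I_r -> 'I_N.+1}) (i : 'I_r) : entry f i = f i.
Proof. by rewrite /entry valK. Qed.

Lemma entry_lt r (f : {ffun 'I_r -> 'I_N.+1}) k (k_lt : (k < r)%N) :
  entry f k = f (Ordinal k_lt).
Proof. exact: (entry_ord f (Ordinal k_lt)). Qed.

Lemma xat_entry (x : seqT) t : (t < len)%N -> xat x t = entry x t.
Proof.
move=> t_lt; rewrite (entry_lt x t_lt) /xat.
by congr (nat_of_ord (x _)); apply: val_inj; rewrite /= inordK.
Qed.

Definition split_seq (x : seqT) : starT * strictT :=
  ([ffun k : 'I_(size star_args) => entry x (a + k)],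
   [ffun i : 'I_(size strict_args) => entry x (a.-1 - i)]).
Definition join_seq (y : starT * strictT) : seqT :=
  [ffun t : 'I_len => if (a <= t)%N then entry y.1 (t - a) else entry y.2 (a.-1 - t)].

Lemma split_seqK x : join_seq (split_seq x) = x.
Proof.
apply/ffunP => t; rewrite ffunE /=; have := ltn_ord t; case: ifP => a_t t_lt.
  have k_lt : (t - a < size star_args)%N by rewrite size_star_args; lia.
  by rewrite (entry_lt _ k_lt) ffunE /= subnKC // entry_ord.
have i_lt : (a.-1 - t < size strict_args)%N by rewrite size_strict_args; lia.
by rewrite (entry_lt _ i_lt) ffunE /= (_ : (a.-1 - (a.-1 - t))%N = t) ?entry_ord //; lia.
Qed.

Lemma join_seqK y : split_seq (join_seq y) = y.
Proof.
case: y => y1 y2; congr pair; apply/ffunP => k; rewrite ffunE.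
  have k_lt : (k < (j + p).+1)%N.
    by move: (ltn_ord k); rewrite [X in (_ < X)%N]size_star_args.
  have t_lt : (a + k < len)%N by lia.
  rewrite (entry_lt _ t_lt) ffunE /= ifT; last by lia.
  by rewrite (_ : (a + k - a)%N = k) ?entry_ord //; lia.
have k_lt : (k < q - j)%N.
  by move: (ltn_ord k); rewrite [X in (_ < X)%N]size_strict_args.
have t_lt : (a.-1 - k < len)%N by lia.
rewrite (entry_lt _ t_lt) ffunE /= ifF; last by lia.
by rewrite (_ : (a.-1 - (a.-1 - k))%N = k) ?entry_ord //; lia.
Qed.

Lemma split_seq1 x (k : 'I_(size star_args)) :
  ((split_seq x).1 k : nat) = xat x (a + k).
Proof.
rewrite ffunE xat_entry //.
by move: (ltn_ord k); rewrite [X in (_ < X)%N]size_star_args; lia.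
Qed.

Lemma split_seq2 x (k : 'I_(size strict_args)) :
  ((split_seq x).2 k : nat) = xat x (a.-1 - k).
Proof.
rewrite ffunE xat_entry //.
by move: (ltn_ord k); rewrite [X in (_ < X)%N]size_strict_args; lia.
Qed.

Lemma chains_split_seq x :
  chainb leq (fun k => nat_of_ord ((split_seq x).1 k)) &&
  chainb ltn (fun i => nat_of_ord ((split_seq x).2 i)) = cut_seq a x.
Proof.
have star_chainP := @chainbP leq _ _ (fun k => xat x (a + k)) (split_seq1 x).
have strict_chainP := @chainbP ltn _ _ (fun k => xat x (a.-1 - k)) (split_seq2 x).
rewrite /cut_seq; apply/idP/idP.
  case/andP=> /star_chainP[star_pos star_mon] /strict_chainP[strict_pos strict_mon].
  rewrite size_star_args in star_pos star_mon.
  rewrite size_strict_args in strict_pos strict_mon.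
  apply/and3P; split.
  - apply/positive_seqP => t t_lt; have [a_t|t_a] := leqP a t.
      by have := star_pos (t - a)%N; rewrite subnKC //; apply; lia.
    have := strict_pos (a.-1 - t)%N.
    by rewrite (_ : (a.-1 - (a.-1 - t))%N = t); [apply|]; lia.
  - apply/incr_fromP => t t' a_t tt' t'_lt.
    by have := star_mon (t - a)%N (t' - a)%N; rewrite !subnKC //; [apply|]; lia.
  - apply/decr_uptoP => t t' tt' t'a t'_lt.
    have := strict_mon (a.-1 - t')%N (a.-1 - t)%N.
    rewrite (_ : (a.-1 - (a.-1 - t'))%N = t') 1?(_ : (a.-1 - (a.-1 - t))%N = t).
    - by apply; lia.
    - by lia.
    - by lia.
move=> /and3P[/positive_seqP x_pos /incr_fromP x_incr /decr_uptoP x_decr].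
apply/andP; split.
  apply/star_chainP; rewrite size_star_args.
  by split => [k k_lt|k k' kk' k'_lt]; [apply: x_pos | apply: x_incr]; lia.
apply/strict_chainP; rewrite size_strict_args.
by split => [k k_lt|k k' kk' k'_lt]; [apply: x_pos | apply: x_decr]; lia.
Qed.

Lemma weight_split_seq x :
  (\prod_(i < size star_args) npow_neg ((split_seq x).1 i) (nth 0 star_args i)) *
  (\prod_(i < size strict_args) npow_neg ((split_seq x).2 i) (nth 0 strict_args i)) =
  seq_weight z x.
Proof.
set G := fun t : nat => npow_neg (xat x t) (z (t%:Z - q%:Z)).
have -> : seq_weight z x = \prod_(0 <= t < a) G t * \prod_(a <= t < len) G t.
  rewrite -big_cat_nat ?leq0n //; last by lia.
  by rewrite big_mkord; apply: eq_bigr => t _; rewrite /G xat_ord.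
rewrite mulrC; congr (_ * _).
  pose H i := npow_neg (xat x (a.-1 - i)) (nth 0 strict_args i).
  rewrite (eq_bigr (fun i : 'I_(size strict_args) => H i)); last first.
    by move=> i _; rewrite /H -split_seq2.
  rewrite -(big_mkord xpredT H).
  rewrite size_strict_args [in RHS]big_nat_rev /=; apply: eq_big_nat => i /andP[_ i_lt].
  rewrite /H nth_strict_args // /G add0n (_ : (a - i.+1)%N = (a.-1 - i)%N); last by lia.
  by congr (npow_neg _ (z _)); lia.
pose H i := npow_neg (xat x (a + i)) (nth 0 star_args i).
rewrite (eq_bigr (fun i : 'I_(size star_args) => H i)); last first.
  by move=> i _; rewrite /H -split_seq1.
rewrite -(big_mkord xpredT H).
rewrite size_star_args -[in RHS](add0n a) big_addn.
rewrite (_ : (len - a)%N = (j + p).+1); last by lia.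
apply: eq_big_nat => k /andP[_ k_lt]; rewrite /H nth_star_args // /G addnC.
by congr (npow_neg _ (z _)); lia.
Qed.

Lemma zeta_product_trunc :
  mzetastar_trunc star_args N * mzeta_trunc strict_args N =
  \sum_(x : seqT | cut_seq a x) seq_weight z x.
Proof.
rewrite /mzetastar_trunc /mzeta_trunc big_distrlr /= pair_big_dep /=.
apply: (@reindex_bij _ _ _ _ _ _ _ split_seq join_seq).
- by move=> y _; exact: join_seqK.
- exact: split_seqK.
- exact: chains_split_seq.
- by move=> x _; exact: weight_split_seq.
Qed.

End ProductAsCut.

Lemma hook_formula_trunc (R : realType) (p q : nat) (z : int -> R[i]) N :
  schur_zeta_trunc (hook p q) (fun i j => z (j%:Z - i%:Z)) N =
  \sum_(j < q.+1) (-1) ^+ j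
     * mzetastar_trunc [seq z (k%:Z - j%:Z) | k <- iota 0 (j + p).+1] N
     * mzeta_trunc [seq z (- ((j.+1 + i)%N)%:Z) | i <- iota 0 (q - j)] N.
Proof.
rewrite schur_zeta_trunc_hook -alternating_cut_sum; apply: eq_bigr => j _.
by rewrite -mulrA zeta_product_trunc // -ltnS.
Qed.

Theorem theorem3p1 (R : realType) (p q : nat) (z : int -> R[i])
  (hz : forall k : int, - (q%:Z) <= k -> k <= p%:Z -> 1 <= complex.Re (z k))
  (hzp : 1 < complex.Re (z p%:Z))
  (hzq : 1 < complex.Re (z (- (q%:Z)))) :
  schur_zeta (hook p q) (fun i j => z (j%:Z - i%:Z)) =
  \sum_(j < q.+1)
     (-1) ^+ j
     * mzetastar [seq z (k%:Z - j%:Z) | k <- iota 0 (j + p).+1]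
     * mzeta [seq z (- ((j.+1 + i)%N)%:Z) | i <- iota 0 (q - j)].
Proof.
rewrite /schur_zeta (boolp.funext (@hook_formula_trunc R p q z)).
apply: clim_ccvg; apply: ccvg_sum => j; have j_le_q : (j <= q)%N by rewrite -ltnS.
apply: ccvgM; first apply: ccvgM; first exact: ccvg_cst.
- apply: mzetastar_ccvg => [i|_]; rewrite size_star_args.
    by move=> i_lt; rewrite nth_star_args //; apply: hz; lia.
  by rewrite nth_star_args // (_ : _ - _ = p%:Z) //; lia.
- apply: mzeta_ccvg => [i|]; rewrite size_strict_args => i_lt.
    by rewrite nth_strict_args //; apply: hz; lia.
  rewrite nth_strict_args; last by lia.
  by have -> : (j.+1 + (q - j).-1)%N = q by lia.
Qed.
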